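(* Let $(X,d)$ be a compact metric space and $F:X\to 2^X$ an expansive, upper semicontinuous set-valued map. If $F$ is open, then the shift $\sigma_{rF}:\mathrm{Orb}_r(X)\to\mathrm{Orb}_r(X)$ has the shadowing property (as a single-valued map on the metric space $(\mathrm{Orb}_r(X),\rho)$).
   Context: $X$ has diameter $1$; $2^X$ is the family of nonempty compact subsets of $X$. $F$ is upper semicontinuous if for every $x$ and open $U\supset F(x)$ there is a neighborhood $V$ of $x$ with $F(y)\subset U$ for $y\in V$. $F$ is open if $F(U)=\bigcup_{u\in U}F(u)$ is open for every open $U$. $\mathrm{Orb}_r(X)=\{(x_0,x_1,\dots)\in X^{\mathbb N}: x_{n+1}\in F(x_n)\ \forall n\}$ with metric $\rho((x_n),(y_n))=\sum_{n\ge0}d(x_n,y_n)/2^{n+1}$; $\sigma_{rF}((x_0,x_1,\dots))=(x_1,x_2,\dots)$. $F$ is expansive if there is $\delta>0$ such that for any $(x_n),(y_n)\in\mathrm{Orb}_r(X)$ with $d(x_n,y_n)<\delta$ for all $n$ one has $x_0=y_0$. A single-valued continuous map $g$ on a metric space $(Z,\rho)$ has the shadowing property if for every $\varepsilon>0$ there is $\delta>0$ such that for every sequence $\{z_n\}_{n\ge0}$ with $\rho(g(z_n),z_{n+1})<\delta$ there is $z\in Z$ with $\rho(g^n(z),z_n)<\varepsilon$ for all $n$. *)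

From Stdlib Require Import Reals List.
From Coquelicot Require Import Coquelicot.
Open Scope R_scope.

Section MetricDefs.
Context {X : Type} (d : X -> X -> R).

Definition is_metric : Prop :=
  (forall x y, 0 <= d x y) /\
  (forall x y, d x y = 0 <-> x = y) /\
  (forall x y, d x y = d y x) /\
  (forall x y z, d x z <= d x y + d y z).

Definition diameter_one : Prop :=
  (forall x y, d x y <= 1) /\
  (forall e, 0 < e -> exists x y, 1 - e < d x y).

Definition open_set (U : X -> Prop) : Prop :=
  forall x, U x -> exists r, 0 < r /\ forall y, d x y < r -> U y.

Definition compact_set (K : X -> Prop) : Prop :=
  forall (I : Type) (U : I -> X -> Prop),
    (forall i, open_set (U i)) ->
    (forall x, K x -> exists i, U i x) ->
    exists l : list I, forall x, K x -> exists i, In i l /\ U i x.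

Definition compact_space : Prop := compact_set (fun _ => True).

Definition values_in_2X (F : X -> X -> Prop) : Prop :=
  forall x, (exists y, F x y) /\ compact_set (F x).

Definition usc (F : X -> X -> Prop) : Prop :=
  forall x (U : X -> Prop), open_set U -> (forall y, F x y -> U y) ->
    exists r, 0 < r /\ forall x', d x x' < r -> forall y, F x' y -> U y.

Definition image_set (F : X -> X -> Prop) (U : X -> Prop) : X -> Prop :=
  fun y => exists u, U u /\ F u y.

Definition open_map (F : X -> X -> Prop) : Prop :=
  forall U, open_set U -> open_set (image_set F U).

Definition is_orbit (F : X -> X -> Prop) (x : nat -> X) : Prop :=
  forall n, F (x n) (x (S n)).

Definition expansive (F : X -> X -> Prop) : Prop :=
  exists delta, 0 < delta /\
    forall x y, is_orbit F x -> is_orbit F y ->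
      (forall n, d (x n) (y n) < delta) -> x 0%nat = y 0%nat.

Definition rho (x y : nat -> X) : R :=
  Series (fun n => d (x n) (y n) / 2 ^ (S n)).

End MetricDefs.

Definition shift {X : Type} (x : nat -> X) : nat -> X := fun n => x (S n).

Definition shadowing {Y : Type} (Z : Y -> Prop) (rho : Y -> Y -> R)
  (g : Y -> Y) : Prop :=
  forall eps, 0 < eps -> exists delta, 0 < delta /\
    forall z : nat -> Y, (forall n, Z (z n)) ->
      (forall n, rho (g (z n)) (z (S n)) < delta) ->
      exists w, Z w /\ forall n, rho (Nat.iter n g w) (z n) < eps.

(* By compactness, openness of F becomes a uniform lifting property (a point
   close to some y in F(x) lies in F(x') for some x' close to x), and
   expansivity becomes a uniform statement: two orbit segments of a fixed
   length N that stay de/2-close must start close.  Given a fine pseudo-orbit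
   of X one then builds true orbit segments backwards, one point at a time:
   the new initial point comes from the lifting property, and comparing the
   extended segment over N steps with a short segment shadowing the
   pseudo-orbit pins it close to the pseudo-orbit.  Since F has a closed
   graph, a diagonal limit of these finite orbits is a full orbit, so F has
   the shadowing property on X.  For the shift, the initial coordinates of a
   delta-pseudo-orbit of (Orb_r(X), rho) form a pseudo-orbit of X whose k-th
   coordinates drift from it by at most k delta 2^k, and rho is controlled by
   finitely many coordinates up to a geometric tail. *)

From Stdlib Require Import Reals List Lra Lia Classical ClassicalEpsilon.
From Coquelicot Require Import Coquelicot.
Open Scope R_scope.

Lemma list_nat_bound {A : Type} (l : list A) (f : A -> nat) :
  exists M, forall i, In i l -> (f i <= M)%nat.
Proof.
  induction l as [|a l [M HM]]; [now exists 0%nat|].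
  exists (Nat.max (f a) M); intros i [<-|Hi]; [lia|].
  specialize (HM i Hi); lia.
Qed.

Lemma inv_INR_S_pos k : 0 < / INR (S k).
Proof. apply Rinv_0_lt_compat, lt_0_INR; lia. Qed.

Lemma inv_INR_S_eventually_lt r : 0 < r ->
  exists N, forall k, (N <= k)%nat -> / INR (S k) < r.
Proof.
  intros Hr; destruct (archimed_cor1 r Hr) as [N [HN HN0]]; exists N.
  intros k Hk; eapply Rle_lt_trans; [|exact HN].
  apply Rinv_le_contravar; [apply lt_0_INR; lia | apply le_INR; lia].
Qed.

Section Metric.
Context {X : Type} (d : X -> X -> R) (Hd : is_metric d).

Lemma dist_ge0 x y : 0 <= d x y. Proof. apply Hd. Qed.
Lemma dist_sym x y : d x y = d y x. Proof. apply Hd. Qed.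
Lemma dist_triangle x y z : d x z <= d x y + d y z. Proof. apply Hd. Qed.
Lemma dist_xx x : d x x = 0. Proof. now apply Hd. Qed.

Lemma dist_gt0 x y : x <> y -> 0 < d x y.
Proof.
  intros Hxy; destruct (dist_ge0 x y) as [|E]; [easy|].
  now exfalso; apply Hxy, Hd.
Qed.

Lemma open_ball a r : open_set d (fun y => d a y < r).
Proof.
  intros x Hx; exists (r - d a x); split; [lra|].
  intros y Hy; pose proof (dist_triangle a x y); lra.
Qed.

Lemma open_far y r : open_set d (fun z => r < d z y).
Proof.
  intros x Hx; exists (d x y - r); split; [lra|].
  intros z Hz; pose proof (dist_triangle x z y); lra.
Qed.

Lemma compact_dist_bounded_below (K : X -> Prop) y :
  compact_set d K -> ~ K y -> exists r, 0 < r /\ forall z, K z -> r <= d z y.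
Proof.
  intros HK Hy.
  destruct (HK nat (fun n z => / INR (S n) < d z y)) as [l Hl].
  - intro n; apply open_far.
  - intros z Hz.
    assert (Hzy : z <> y) by (intros ->; contradiction).
    destruct (inv_INR_S_eventually_lt _ (dist_gt0 z y Hzy)) as [N HN].
    exists N; apply HN; lia.
  - destruct (list_nat_bound l (fun n => n)) as [M HM].
    exists (/ INR (S M)); split; [apply inv_INR_S_pos|].
    intros z Hz; destruct (Hl z Hz) as [n [Hn Hnz]].
    left; eapply Rle_lt_trans; [|exact Hnz].
    apply Rinv_le_contravar; [apply lt_0_INR; lia | apply le_INR].
    specialize (HM n Hn); lia.
Qed.

Definition converges (a : nat -> X) (x : X) : Prop :=
  forall r, 0 < r -> exists K, forall k, (K <= k)%nat -> d (a k) x < r.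

(* Reindexings are only required to satisfy k <= phi k, not to be increasing;
   this is all convergence along them needs, and it is stable under composition. *)
Lemma converges_subseq a x (phi : nat -> nat) :
  converges a x -> (forall k, (k <= phi k)%nat) ->
  converges (fun k => a (phi k)) x.
Proof.
  intros Ha Hphi r Hr; destruct (Ha r Hr) as [K HK].
  exists K; intros k Hk; apply HK; specialize (Hphi k); lia.
Qed.

Lemma converges_dist a b x y r : converges a x -> converges b y -> 0 < r ->
  exists K, forall k, (K <= k)%nat -> Rabs (d (a k) (b k) - d x y) < r.
Proof.
  intros Ha Hb Hr.
  destruct (Ha (r / 2)) as [Ka HKa]; [lra|].
  destruct (Hb (r / 2)) as [Kb HKb]; [lra|].
  exists (Ka + Kb)%nat; intros k Hk.
  specialize (HKa k ltac:(lia)); specialize (HKb k ltac:(lia)).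
  pose proof (dist_triangle (a k) x (b k)); pose proof (dist_triangle x y (b k)).
  pose proof (dist_triangle x (a k) y); pose proof (dist_triangle (a k) (b k) y).
  rewrite (dist_sym x (a k)) in *; rewrite (dist_sym y (b k)) in *.
  apply Rabs_def1; lra.
Qed.

Lemma converges_dist_le a b x y c : converges a x -> converges b y ->
  (exists K, forall k, (K <= k)%nat -> d (a k) (b k) <= c) -> d x y <= c.
Proof.
  intros Ha Hb [K HK]; apply Rnot_lt_le; intros Hlt.
  destruct (converges_dist a b x y (d x y - c) Ha Hb) as [K' HK']; [lra|].
  specialize (HK (K + K')%nat ltac:(lia)); specialize (HK' (K + K')%nat ltac:(lia)).
  apply Rabs_def2 in HK'; lra.
Qed.

Lemma converges_dist_ge a b x y c : converges a x -> converges b y ->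
  (exists K, forall k, (K <= k)%nat -> c <= d (a k) (b k)) -> c <= d x y.
Proof.
  intros Ha Hb [K HK]; apply Rnot_lt_le; intros Hlt.
  destruct (converges_dist a b x y (c - d x y) Ha Hb) as [K' HK']; [lra|].
  specialize (HK (K + K')%nat ltac:(lia)); specialize (HK' (K + K')%nat ltac:(lia)).
  apply Rabs_def2 in HK'; lra.
Qed.

Section Compact.
Hypothesis Hc : compact_space d.

Lemma compact_cluster_point (s : nat -> X) :
  exists a, forall r, 0 < r -> forall M, exists n, (M <= n)%nat /\ d (s n) a < r.
Proof.
  apply NNPP; intros Hnone.
  assert (Hfar : forall a, exists r M, 0 < r /\
            forall n, (M <= n)%nat -> r <= d (s n) a).
  { intros a; apply NNPP; intros Ha; apply Hnone; exists a; intros r Hr M.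
    apply NNPP; intros HM; apply Ha; exists r, M; split; [easy|].
    intros n Hn; apply Rnot_lt_le; intros Hlt; apply HM; now exists n. }
  (* cover X by balls B(a, r) that the tail (s n)_{n >= M} avoids *)
  pose (U := fun (i : X * R * nat) y => let '(a, r, M) := i in
    (forall n, (M <= n)%nat -> r <= d (s n) a) /\ d a y < r).
  destruct (Hc _ U) as [l Hl].
  - intros [[a r] M] y [HM Hy]; exists (r - d a y); split; [lra|].
    intros z Hz; split; [easy|]; pose proof (dist_triangle a y z); lra.
  - intros a _; destruct (Hfar a) as [r [M [Hr HM]]].
    exists (a, r, M); split; [easy|]; now rewrite dist_xx.
  - destruct (list_nat_bound l (fun i => snd i)) as [K HK].
    destruct (Hl (s K) I) as [[[a r] M] [Hin [HM Hs]]].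
    specialize (HM K (HK _ Hin)); rewrite dist_sym in Hs; lra.
Qed.

Lemma compact_subseq (s : nat -> X) :
  exists (phi : nat -> nat) a,
    (forall k, (k <= phi k)%nat) /\ converges (fun k => s (phi k)) a.
Proof.
  destruct (compact_cluster_point s) as [a Ha].
  destruct (choice (fun k n => (k <= n)%nat /\ d (s n) a < / INR (S k))) as [phi Hphi].
  { intros k; apply Ha, inv_INR_S_pos. }
  exists phi, a; split; [apply Hphi|].
  intros r Hr; destruct (inv_INR_S_eventually_lt r Hr) as [N HN].
  exists N; intros k Hk; eapply Rlt_trans; [apply Hphi | now apply HN].
Qed.

Fixpoint nested_subseq (phi : (nat -> X) -> nat -> nat) (s : nat -> nat -> X)
    (j : nat) : nat -> nat :=
  match j with
  | O => fun k => k
  | S j => fun k =>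
      nested_subseq phi s j (phi (fun m => s (nested_subseq phi s j m) j) k)
  end.

Lemma nested_subseq_tail phi s :
  (forall t k, (k <= phi t k)%nat) ->
  forall j m k, exists k', (k <= k')%nat /\
    nested_subseq phi s (j + m) k = nested_subseq phi s j k'.
Proof.
  intros Hphi j m; induction m as [|m IH]; intros k.
  - exists k; rewrite Nat.add_0_r; split; [lia | easy].
  - rewrite Nat.add_succ_r; cbn [nested_subseq].
    destruct (IH (phi (fun n => s (nested_subseq phi s (j + m) n) (j + m)%nat) k))
      as [k' [Hk' ->]].
    exists k'; split; [|easy]; eapply Nat.le_trans; [apply Hphi | exact Hk'].
Qed.

Lemma compact_diagonal_subseq (s : nat -> nat -> X) :
  exists (D : nat -> nat) (A : nat -> X), (forall n, (n <= D n)%nat) /\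
    forall i, converges (fun n => s (D n) i) (A i).
Proof.
  destruct (choice (fun t (pa : (nat -> nat) * X) =>
      (forall k, (k <= fst pa k)%nat) /\ converges (fun k => t (fst pa k)) (snd pa)))
    as [sub Hsub].
  { intros t; destruct (compact_subseq t) as [phi [a Ha]]; now exists (phi, a). }
  pose (phi := fun t => fst (sub t)).
  assert (Hphi : forall t k, (k <= phi t k)%nat) by (intros t; apply Hsub).
  (* from n = i on, the n-th diagonal index lies in the (i+1)-th nested subsequence *)
  exists (fun n => nested_subseq phi s (S n) n),
    (fun i => snd (sub (fun m => s (nested_subseq phi s i m) i))).
  split.
  - intros n; destruct (nested_subseq_tail phi s Hphi 0 (S n) n) as [k [Hk E]].
    change (0 + S n)%nat with (S n) in E; now rewrite E.
  - intros i r Hr.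
    destruct (proj2 (Hsub (fun m => s (nested_subseq phi s i m) i)) r Hr) as [K HK].
    exists (Nat.max i K); intros n Hn.
    destruct (nested_subseq_tail phi s Hphi (S i) (n - i) n) as [k [Hk E]].
    replace (S i + (n - i))%nat with (S n) in E by lia.
    rewrite E; apply HK; lia.
Qed.

Section SetValued.
Context (F : X -> X -> Prop) (HF : values_in_2X d F) (Husc : usc d F).

Lemma usc_closed_graph a b x y : converges a x -> converges b y ->
  (exists K, forall k, (K <= k)%nat -> F (a k) (b k)) -> F x y.
Proof.
  intros Ha Hb [KF HKF]; apply NNPP; intros Hxy.
  destruct (compact_dist_bounded_below (F x) y (proj2 (HF x)) Hxy) as [r [Hr Hsep]].
  destruct (Husc x (fun z => r / 2 < d z y) (open_far y (r / 2))) as [e [He Hnear]].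
  { intros z Hz; specialize (Hsep z Hz); lra. }
  destruct (Ha e He) as [Ka HKa]; destruct (Hb (r / 2)) as [Kb HKb]; [lra|].
  pose (k := (Ka + Kb + KF)%nat).
  specialize (HKa k ltac:(lia)); specialize (HKb k ltac:(lia)).
  rewrite dist_sym in HKa; specialize (Hnear (a k) HKa (b k) (HKF k ltac:(lia))); lra.
Qed.

Definition orbit_on (w : nat -> X) (i j : nat) : Prop :=
  forall k, (i <= k < j)%nat -> F (w k) (w (S k)).

Definition shadows_on (e : R) (w x : nat -> X) (i j : nat) : Prop :=
  forall k, (i <= k <= j)%nat -> d (w k) (x k) < e.

Definition pseudo_orbit (e : R) (x : nat -> X) : Prop :=
  forall n, exists y, F (x n) y /\ d (x (S n)) y < e.

Definition set_at (w : nat -> X) (i : nat) (a : X) : nat -> X :=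
  fun k => if Nat.eqb k i then a else w k.

Lemma orbit_on_le w i j j' : (j' <= j)%nat -> orbit_on w i j -> orbit_on w i j'.
Proof. intros Hj Hw k Hk; apply Hw; lia. Qed.

Lemma orbit_on_shift w i j N : (i + N <= j)%nat -> orbit_on w i j ->
  orbit_on (fun k => w (i + k)%nat) 0 N.
Proof. intros Hij Hw k Hk; rewrite Nat.add_succ_r; apply Hw; lia. Qed.

Lemma orbit_on_set_at w i j a : orbit_on w (S i) j -> F a (w (S i)) ->
  orbit_on (set_at w i a) i j.
Proof.
  intros Hw Ha k Hk; unfold set_at.
  destruct (Nat.eqb_spec (S k) i); [lia|].
  destruct (Nat.eqb_spec k i) as [->|]; [easy|]; apply Hw; lia.
Qed.

Lemma shadows_on_set_at e w x i j a : shadows_on e w x (S i) j -> d a (x i) < e ->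
  shadows_on e (set_at w i a) x i j.
Proof.
  intros Hw Ha k Hk; unfold set_at.
  destruct (Nat.eqb_spec k i) as [->|]; [easy|]; apply Hw; lia.
Qed.

Lemma pseudo_orbit_mono e e' x : e <= e' -> pseudo_orbit e x -> pseudo_orbit e' x.
Proof. intros He Hx n; destruct (Hx n) as [y [Hy Hxy]]; exists y; split; [easy | lra]. Qed.

Lemma limit_is_orbit (w : nat -> nat -> X) W : (forall n, orbit_on (w n) 0 n) ->
  (forall i, converges (fun n => w n i) (W i)) -> is_orbit F W.
Proof.
  intros Hw HW i; apply (usc_closed_graph _ _ _ _ (HW i) (HW (S i))).
  exists (S i); intros k Hk; apply Hw; lia.
Qed.

Lemma orbit_of_finite_orbits x c :
  (forall m, exists w, orbit_on w 0 m /\ forall k, (k <= m)%nat -> d (w k) (x k) <= c) ->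
  exists W, is_orbit F W /\ forall n, d (W n) (x n) <= c.
Proof.
  intros Hfin; destruct (choice _ Hfin) as [w Hw].
  destruct (compact_diagonal_subseq w) as [D [W [HD HW]]].
  exists W; split.
  - apply (limit_is_orbit (fun n => w (D n))); [|easy].
    intros n; apply (orbit_on_le _ _ (D n)); [apply HD | apply Hw].
  - intros n; apply (converges_dist_le _ (fun _ => x n) _ _ _ (HW n)).
    + intros r Hr; exists 0%nat; intros k _; now rewrite dist_xx.
    + exists n; intros k Hk; apply Hw; specialize (HD k); lia.
Qed.

Hypothesis Hopen : open_map d F.

Lemma uniform_openness eta : 0 < eta -> exists g, 0 < g /\ g <= eta /\
  forall x y y', F x y -> d y y' < g -> exists x', d x x' < eta /\ F x' y'.
Proof.
  intros He; apply NNPP; intros Hnone.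
  pose (bad := fun k x y y' => F x y /\ d y y' < / INR (S k) /\
                               forall x', d x x' < eta -> ~ F x' y').
  assert (Hbad : forall k, exists p : X * X * X,
             bad k (fst (fst p)) (snd (fst p)) (snd p)).
  { intros k; apply NNPP; intros Hk; apply Hnone.
    exists (Rmin eta (/ INR (S k))); split; [apply Rmin_glb_lt; auto using inv_INR_S_pos|].
    split; [apply Rmin_l|]; intros x y y' Hxy Hyy'.
    apply NNPP; intros Hx'; apply Hk; exists (x, y, y'); repeat split; [easy| |].
    - eapply Rlt_le_trans; [exact Hyy' | apply Rmin_r].
    - intros x' H1 H2; apply Hx'; now exists x'. }
  destruct (choice _ Hbad) as [p Hp].
  destruct (compact_subseq (fun k => fst (fst (p k)))) as [phi [a [Hphi Ha]]].
  destruct (compact_subseq (fun k => snd (fst (p (phi k))))) as [psi [b [Hpsi Hb]]].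
  pose proof (converges_subseq _ _ psi Ha Hpsi) as Ha'; cbv beta in Ha'.
  assert (HFab : F a b).
  { apply (usc_closed_graph _ _ _ _ Ha' Hb); exists 0%nat; intros k _; apply Hp. }
  destruct (Hopen (fun z => d a z < eta / 2) (open_ball a (eta / 2)) b) as [r [Hr Hball]].
  { exists a; rewrite dist_xx; split; [lra | easy]. }
  destruct (Ha' (eta / 2)) as [Ka HKa]; [lra|].
  destruct (Hb (r / 2)) as [Kb HKb]; [lra|].
  destruct (inv_INR_S_eventually_lt (r / 2)) as [N HN]; [lra|].
  pose (k := (Ka + Kb + N)%nat); pose (n := phi (psi k)).
  specialize (HKa k ltac:(lia)); specialize (HKb k ltac:(lia)).
  change (phi (psi k)) with n in HKa, HKb.
  specialize (HN n); specialize (Hphi (psi k)); specialize (Hpsi k).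
  specialize (HN ltac:(unfold n, k in *; lia)).
  destruct (Hp n) as [_ [Hyy' Hno]].
  destruct (Hball (snd (p n))) as [u [Hu HFu]].
  { pose proof (dist_triangle b (snd (fst (p n))) (snd (p n))) as T.
    rewrite (dist_sym b (snd (fst (p n)))) in T; lra. }
  apply (Hno u); [|easy].
  pose proof (dist_triangle (fst (fst (p n))) a u); lra.
Qed.

Lemma pseudo_orbit_finite_shadowing N e : 0 < e -> exists e', 0 < e' /\
  forall x, pseudo_orbit e' x -> forall j,
    exists v, orbit_on v j (j + N) /\ shadows_on e v x j (j + N).
Proof.
  revert e; induction N as [|N IH]; intros e He.
  - exists e; split; [easy|]; intros x _ j; exists x; split; [intros k; lia|].
    intros k _; now rewrite dist_xx.
  - destruct (uniform_openness e He) as [g [Hg [Hge Hopen_g]]].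
    destruct (IH (g / 2)) as [e' [He' Hseg]]; [lra|].
    exists (Rmin e' (g / 2)); split; [now apply Rmin_glb_lt; lra|].
    intros x Hx j.
    destruct (Hseg x (pseudo_orbit_mono _ _ _ (Rmin_l _ _) Hx) (S j)) as [v [Hv Hvx]].
    destruct (Hx j) as [y [Hy Hxy]].
    destruct (Hopen_g (x j) y (v (S j)) Hy) as [a [Ha HFa]].
    { pose proof (Rmin_r e' (g / 2)); specialize (Hvx (S j) ltac:(lia)).
      pose proof (dist_triangle y (x (S j)) (v (S j))).
      rewrite (dist_sym y), (dist_sym (x (S j))) in *; lra. }
    exists (set_at v j a); replace (j + S N)%nat with (S j + N)%nat by lia; split.
    + now apply orbit_on_set_at.
    + apply shadows_on_set_at; [intros k Hk; specialize (Hvx k Hk); lra|].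
      now rewrite dist_sym.
Qed.

Section Expansive.
Variable de : R.
Hypothesis Hde : 0 < de.
Hypothesis Hexp : forall x y, is_orbit F x -> is_orbit F y ->
  (forall n, d (x n) (y n) < de) -> x 0%nat = y 0%nat.

Lemma uniform_expansivity eta : 0 < eta -> exists N, forall a b,
  orbit_on a 0 N -> orbit_on b 0 N ->
  (forall i, (i <= N)%nat -> d (a i) (b i) <= de / 2) -> d (a 0%nat) (b 0%nat) < eta.
Proof.
  intros He; apply NNPP; intros Hnone.
  assert (Hbad : forall N, exists ab : (nat -> X) * (nat -> X),
    orbit_on (fst ab) 0 N /\ orbit_on (snd ab) 0 N /\
    (forall i, (i <= N)%nat -> d (fst ab i) (snd ab i) <= de / 2) /\
    eta <= d (fst ab 0%nat) (snd ab 0%nat)).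
  { intros N; apply NNPP; intros HN; apply Hnone; exists N; intros a b Ha Hb Hab.
    apply Rnot_le_lt; intros Hfar; apply HN; now exists (a, b). }
  destruct (choice _ Hbad) as [ab Hab].
  destruct (compact_diagonal_subseq (fun N => fst (ab N))) as [D1 [A [HD1 HA]]].
  destruct (compact_diagonal_subseq (fun n => snd (ab (D1 n)))) as [D2 [B [HD2 HB]]].
  pose (D := fun n => D1 (D2 n)).
  assert (HD : forall n, (n <= D n)%nat).
  { intros n; specialize (HD2 n); specialize (HD1 (D2 n)); unfold D; lia. }
  assert (HA' : forall i, converges (fun n => fst (ab (D n)) i) (A i)).
  { intros i; exact (converges_subseq _ _ _ (HA i) HD2). }
  assert (Horb : forall n, orbit_on (fst (ab (D n))) 0 n /\ orbit_on (snd (ab (D n))) 0 n).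
  { intros n; split; apply (orbit_on_le _ _ (D n)); apply HD || apply Hab. }
  assert (HAB : A 0%nat = B 0%nat).
  { apply Hexp; [apply (limit_is_orbit (fun n => fst (ab (D n)))); [apply Horb | easy]
                |apply (limit_is_orbit (fun n => snd (ab (D n)))); [apply Horb | easy] |].
    intros i; eapply Rle_lt_trans; [|apply (Rlt_eps2_eps de Hde)].
    apply (converges_dist_le _ _ _ _ _ (HA' i) (HB i)).
    exists i; intros k Hk; apply Hab; specialize (HD k); unfold D in HD; lia. }
  assert (Hfar : eta <= d (A 0%nat) (B 0%nat)).
  { apply (converges_dist_ge _ _ _ _ _ (HA' 0%nat) (HB 0%nat)).
    exists 0%nat; intros k _; apply Hab. }
  rewrite HAB, dist_xx in Hfar; lra.
Qed.

Section BackwardExtension.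
Variables (ga beta : R) (N : nat) (x : nat -> X).
Hypothesis Hopen_ga : forall x y y', F x y -> d y y' < ga ->
  exists x', d x x' < de / 4 /\ F x' y'.
Hypothesis Hga : ga <= de / 4.
Hypothesis Hbeta : 0 < beta.
Hypothesis Hbeta_ga : 2 * beta <= ga.
Hypothesis Hexp_N : forall a b, orbit_on a 0 N -> orbit_on b 0 N ->
  (forall i, (i <= N)%nat -> d (a i) (b i) <= de / 2) -> d (a 0%nat) (b 0%nat) < beta / 2.
Hypothesis Hseg : forall j,
  exists v, orbit_on v j (j + N) /\ shadows_on (beta / 2) v x j (j + N).
Hypothesis Hx : pseudo_orbit beta x.

Lemma shadowing_extend_back w i j : (i + N < j)%nat ->
  orbit_on w (S i) j -> shadows_on beta w x (S i) j ->
  exists w', orbit_on w' i j /\ shadows_on beta w' x i j.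
Proof.
  intros Hij Hw Hwx.
  destruct (Hx i) as [y [Hy Hxy]].
  destruct (Hopen_ga (x i) y (w (S i)) Hy) as [a [Ha HFa]].
  { pose proof (dist_triangle y (x (S i)) (w (S i))); specialize (Hwx (S i) ltac:(lia)).
    rewrite (dist_sym y), (dist_sym (x (S i))) in *; lra. }
  assert (Hw' := orbit_on_set_at w i j a Hw HFa).
  assert (Hw'x : shadows_on (de / 4) (set_at w i a) x i j).
  { apply shadows_on_set_at; [intros k Hk; specialize (Hwx k Hk); lra|].
    now rewrite dist_sym. }
  destruct (Hseg i) as [v [Hv Hvx]].
  assert (Hav : d (set_at w i a (i + 0)) (v (i + 0)%nat) < beta / 2).
  { apply (Hexp_N (fun k => set_at w i a (i + k)) (fun k => v (i + k)%nat)).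
    - apply (orbit_on_shift _ i j); [lia | exact Hw'].
    - apply (orbit_on_shift _ i (i + N)); [lia | exact Hv].
    - intros k Hk; specialize (Hw'x (i + k)%nat ltac:(lia)).
      specialize (Hvx (i + k)%nat ltac:(lia)).
      pose proof (dist_triangle (set_at w i a (i + k)) (x (i + k)%nat) (v (i + k)%nat)).
      rewrite (dist_sym (x (i + k)%nat)) in *; lra. }
  rewrite Nat.add_0_r in Hav; unfold set_at in Hav; rewrite Nat.eqb_refl in Hav.
  exists (set_at w i a); split; [exact Hw'|].
  apply shadows_on_set_at; [exact Hwx|].
  specialize (Hvx i ltac:(lia)); pose proof (dist_triangle a (v i) (x i)); lra.
Qed.

Lemma shadowing_segments t i :
  exists w, orbit_on w i (i + t + N) /\ shadows_on beta w x i (i + t + N).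
Proof.
  revert i; induction t as [|t IH]; intros i.
  - destruct (Hseg i) as [v [Hv Hvx]]; exists v; rewrite Nat.add_0_r; split; [easy|].
    intros k Hk; specialize (Hvx k Hk); lra.
  - destruct (IH (S i)) as [w [Hw Hwx]].
    replace (S i + t + N)%nat with (i + S t + N)%nat in * by lia.
    apply (shadowing_extend_back w); [lia | exact Hw | exact Hwx].
Qed.

End BackwardExtension.

Lemma pseudo_orbit_shadowing th : 0 < th -> exists dl, 0 < dl /\
  forall x, pseudo_orbit dl x -> exists W, is_orbit F W /\ forall n, d (W n) (x n) < th.
Proof.
  intros Hth.
  destruct (uniform_openness (de / 4)) as [ga [Hga [Hga_de Hopen_ga]]]; [lra|].
  pose (beta := Rmin th ga / 2).
  assert (Hbeta : 0 < beta) by (pose proof (Rmin_glb_lt th ga 0 Hth Hga); unfold beta; lra).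
  assert (Hbeta_ga : 2 * beta <= ga) by (pose proof (Rmin_r th ga); unfold beta; lra).
  assert (Hbeta_th : beta < th) by (pose proof (Rmin_l th ga); unfold beta; lra).
  destruct (uniform_expansivity (beta / 2)) as [N HN]; [lra|].
  destruct (pseudo_orbit_finite_shadowing N (beta / 2)) as [e' [He' Hseg]]; [lra|].
  exists (Rmin e' beta); split; [now apply Rmin_glb_lt|].
  intros x Hx.
  destruct (orbit_of_finite_orbits x beta) as [W [HW HWx]].
  - intros m.
    destruct (shadowing_segments ga beta N x Hopen_ga Hga_de Hbeta Hbeta_ga HN
               (Hseg x (pseudo_orbit_mono _ _ _ (Rmin_l _ _) Hx))
               (pseudo_orbit_mono _ _ _ (Rmin_r _ _) Hx) m 0) as [w [Hw Hwx]].
    exists w; split; [apply (orbit_on_le _ _ (0 + m + N)); [lia | easy]|].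
    intros k Hk; left; apply Hwx; lia.
  - exists W; split; [easy|]; intros n; specialize (HWx n); lra.
Qed.

End Expansive.
End SetValued.
End Compact.
End Metric.

Lemma pow_le_pow_of_le1 q m n : 0 <= q <= 1 -> (m <= n)%nat -> q ^ n <= q ^ m.
Proof.
  intros Hq Hmn; induction Hmn as [|n Hmn IH]; [lra|].
  simpl; pose proof (pow_le q n (proj1 Hq)); nra.
Qed.

Lemma is_series_geom_S q : 0 <= q < 1 -> is_series (fun k => q ^ S k) (q / (1 - q)).
Proof.
  intros Hq; apply (is_series_scal_l q (fun k => q ^ k)), is_series_geom.
  rewrite Rabs_pos_eq; lra.
Qed.

Lemma Series_ge_term (a : nat -> R) i :
  (forall n, 0 <= a n) -> ex_series a -> a i <= Series a.
Proof.
  intros Ha Hex.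
  rewrite (Series_incr_n a (S i)); [cbn [Init.Nat.pred] | lia | exact Hex].
  assert (Htail : 0 <= Series (fun k => a (S i + k)%nat)).
  { replace 0 with (Series (fun _ => 0)).
    - apply Series_le; [intros n; split; [lra | apply Ha]|].
      now apply (ex_series_incr_n a (S i)).
    - assert (E : Series (fun _ => 0) = 0 * Series (fun _ => 0)).
      { rewrite <- Series_scal_l; apply Series_ext; intros; ring. }
      lra. }
  assert (Hsum : a i <= sum_f_R0 a i).
  { destruct i as [|i]; simpl; [lra|]; pose proof (cond_pos_sum a i Ha); lra. }
  lra.
Qed.

Lemma iter_shift {X : Type} (w : nat -> X) n k : Nat.iter n shift w k = w (n + k)%nat.
Proof.
  revert k; induction n as [|n IH]; intros k; [easy|].
  simpl; unfold shift at 1; rewrite IH; f_equal; lia.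
Qed.

Section OrbitSpace.
Context {X : Type} (d : X -> X -> R) (Hd : is_metric d) (Hd1 : forall x y, d x y <= 1).

Lemma rho_term_bounds (x y : X) k : 0 <= d x y / 2 ^ S k <= (/ 2) ^ S k.
Proof.
  rewrite pow_inv; pose proof (pow_lt 2 (S k) ltac:(lra)).
  split; [apply Rdiv_le_0_compat; [apply (dist_ge0 d Hd) | easy]|].
  rewrite <- (Rmult_1_l (/ 2 ^ S k)).
  apply Rmult_le_compat_r; [apply Rlt_le, Rinv_0_lt_compat; easy | apply Hd1].
Qed.

Lemma ex_series_rho (x y : nat -> X) : ex_series (fun k => d (x k) (y k) / 2 ^ S k).
Proof.
  apply (ex_series_le (fun k => d (x k) (y k) / 2 ^ S k) (fun k => (/ 2) ^ S k)).
  - intros k; change (Rabs (d (x k) (y k) / 2 ^ S k) <= (/ 2) ^ S k).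
    pose proof (rho_term_bounds (x k) (y k) k); rewrite Rabs_pos_eq; lra.
  - eexists; apply is_series_geom_S; lra.
Qed.

Lemma rho_coord_lt (x y : nat -> X) delta i :
  rho d x y < delta -> d (x i) (y i) < delta * 2 ^ S i.
Proof.
  intros Hxy; apply Rlt_div_l; [apply pow_lt; lra|].
  eapply Rle_lt_trans; [|exact Hxy].
  apply (Series_ge_term (fun k => d (x k) (y k) / 2 ^ S k)); [|apply ex_series_rho].
  intros n; apply rho_term_bounds.
Qed.

(* For k >= N, (1/2)^(k+1) = (2/3)^(k+1) (3/4)^(k+1) <= (2/3)^N (3/4)^(k+1). *)
Lemma rho_le_of_close_prefix (x y : nat -> X) N c : 0 <= c ->
  (forall k, (k < N)%nat -> d (x k) (y k) <= c) -> rho d x y <= c + 3 * (2 / 3) ^ N.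
Proof.
  intros Hc Hxy.
  pose (b := fun k => c * (/ 2) ^ S k + (2 / 3) ^ N * (3 / 4) ^ S k).
  assert (Hb : is_series b (c + 3 * (2 / 3) ^ N)).
  { replace (c + 3 * (2 / 3) ^ N)
      with (c * (/ 2 / (1 - / 2)) + (2 / 3) ^ N * (3 / 4 / (1 - 3 / 4))) by field.
    apply (is_series_plus (fun k => c * (/ 2) ^ S k) (fun k => (2 / 3) ^ N * (3 / 4) ^ S k));
      apply (is_series_scal_l _ (fun k => _ ^ S k)), is_series_geom_S; lra. }
  unfold rho; rewrite <- (is_series_unique b _ Hb).
  apply Series_le; [|eexists; exact Hb].
  intros k; pose proof (rho_term_bounds (x k) (y k) k) as Hk; split; [easy|].
  pose proof (pow_le (/ 2) (S k) ltac:(lra)); pose proof (pow_le (3 / 4) (S k) ltac:(lra)).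
  pose proof (pow_le (2 / 3) N ltac:(lra)); unfold b.
  destruct (Nat.lt_ge_cases k N) as [HkN|HkN].
  - assert (E : d (x k) (y k) / 2 ^ S k = d (x k) (y k) * (/ 2) ^ S k)
      by (rewrite pow_inv; reflexivity).
    specialize (Hxy k HkN); rewrite E.
    assert (d (x k) (y k) * (/ 2) ^ S k <= c * (/ 2) ^ S k) by now apply Rmult_le_compat_r.
    nra.
  - assert (E : (/ 2) ^ S k = (2 / 3) ^ S k * (3 / 4) ^ S k)
      by (rewrite <- Rpow_mult_distr; f_equal; field).
    assert ((2 / 3) ^ S k <= (2 / 3) ^ N) by (apply pow_le_pow_of_le1; lra || lia).
    assert ((2 / 3) ^ S k * (3 / 4) ^ S k <= (2 / 3) ^ N * (3 / 4) ^ S k)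
      by now apply Rmult_le_compat_r.
    assert (0 <= c * (/ 2) ^ S k) by now apply Rmult_le_pos.
    lra.
Qed.

Context (F : X -> X -> Prop).

Lemma shift_pseudo_orbit_base z delta : (forall n, is_orbit F (z n)) ->
  (forall n, rho d (shift (z n)) (z (S n)) < delta) ->
  pseudo_orbit d F (2 * delta) (fun n => z n 0%nat).
Proof.
  intros Hz Hzd n; exists (z n 1%nat); split; [apply Hz|].
  pose proof (rho_coord_lt _ _ _ 0 (Hzd n)) as H; unfold shift in H; simpl in H.
  rewrite (dist_sym d Hd); lra.
Qed.

Lemma shift_pseudo_orbit_drift (z : nat -> nat -> X) delta :
  (forall n, rho d (shift (z n)) (z (S n)) < delta) ->
  forall k n, d (z n k) (z (n + k)%nat 0%nat) <= INR k * (delta * 2 ^ k).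
Proof.
  intros Hzd k; induction k as [|k IH]; intros n.
  - rewrite Nat.add_0_r, (dist_xx d Hd); simpl; lra.
  - pose proof (rho_coord_lt _ _ _ k (Hzd n)) as Hstep; unfold shift in Hstep.
    pose proof (IH (S n)) as Hrest; replace (S n + k)%nat with (n + S k)%nat in Hrest by lia.
    pose proof (dist_triangle d Hd (z n (S k)) (z (S n) k) (z (n + S k)%nat 0%nat)).
    pose proof (dist_ge0 d Hd (z n (S k)) (z (S n) k)); pose proof (pos_INR k).
    rewrite S_INR; simpl pow in *; nra.
Qed.

Lemma shadowing_of_pseudo_orbit_shadowing :
  (forall th, 0 < th -> exists dl, 0 < dl /\ forall x, pseudo_orbit d F dl x ->
     exists W, is_orbit F W /\ forall n, d (W n) (x n) < th) ->
  shadowing (is_orbit F) (rho d) shift.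
Proof.
  intros Hbase eps Heps.
  destruct (Hbase (eps / 4)) as [dl [Hdl Hsh]]; [lra|].
  destruct (pow_lt_1_zero (2 / 3)) with (y := eps / 6) as [N HN];
    [rewrite Rabs_pos_eq; lra | lra |].
  specialize (HN N (le_n N)); rewrite Rabs_pos_eq in HN by (apply pow_le; lra).
  assert (H2N : 0 < 2 ^ N) by (apply pow_lt; lra); pose proof (pos_INR N).
  pose (M := 4 * (INR N + 1) * 2 ^ N); assert (HM : 0 < M) by (unfold M; nra).
  pose (delta := Rmin (dl / 2) (eps / M)).
  assert (Hdelta : 0 < delta) by (apply Rmin_glb_lt; [lra | now apply Rdiv_lt_0_compat]).
  assert (Hdelta_dl : 2 * delta <= dl) by (pose proof (Rmin_l (dl / 2) (eps / M)); unfold delta; lra).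
  assert (Hdrift : forall k, (k < N)%nat -> INR k * (delta * 2 ^ k) <= eps / 4).
  { intros k Hk.
    assert (delta * M <= eps) by (apply Rle_div_r; [easy | apply Rmin_r]).
    apply Rle_trans with (INR N * (delta * 2 ^ N)); [|unfold M in *; nra].
    apply Rmult_le_compat; [apply pos_INR | pose proof (pow_lt 2 k); nra
                           | apply le_INR; lia |].
    apply Rmult_le_compat_l; [lra | apply Rle_pow; [lra | lia]]. }
  exists delta; split; [easy|]; intros z Hz Hzd.
  destruct (Hsh (fun n => z n 0%nat)) as [W [HW HWz]].
  { apply (pseudo_orbit_mono d F (2 * delta)); [easy|].
    now apply shift_pseudo_orbit_base. }
  exists W; split; [easy|]; intros n.
  apply Rle_lt_trans with (eps / 2 + 3 * (2 / 3) ^ N); [|lra].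
  apply rho_le_of_close_prefix; [lra|]; intros k Hk; rewrite iter_shift.
  pose proof (shift_pseudo_orbit_drift z delta Hzd k n); pose proof (HWz (n + k)%nat).
  pose proof (dist_triangle d Hd (W (n + k)%nat) (z (n + k)%nat 0%nat) (z n k)).
  pose proof (Hdrift k Hk); rewrite (dist_sym d Hd (z (n + k)%nat 0%nat)) in *.
  simpl in *; lra.
Qed.

End OrbitSpace.

Theorem theorem3p8 (X : Type) (d : X -> X -> R) (F : X -> X -> Prop)
  (Hd : is_metric d) (Hdiam : diameter_one d) (Hcomp : compact_space d)
  (HF : values_in_2X d F) (Husc : usc d F) (Hexp : expansive d F)
  (Hopen : open_map d F) :
  shadowing (is_orbit F) (rho d) shift.
Proof.
  destruct Hexp as [de [Hde Hexp_de]].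
  apply (shadowing_of_pseudo_orbit_shadowing d Hd (proj1 Hdiam) F).
  exact (pseudo_orbit_shadowing d Hd Hcomp F HF Husc Hopen de Hde Hexp_de).
Qed.
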